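(* Let $\mathbf A\in\mathbb C^{n\times n}$ with $\operatorname{Ind}\mathbf A=k_1$ and $\operatorname{rank}\mathbf A^{k_1+1}=\operatorname{rank}\mathbf A^{k_1}=r_1\le n$, let $\mathbf B\in\mathbb C^{m\times m}$ with $\operatorname{Ind}\mathbf B=k_2$ and $\operatorname{rank}\mathbf B^{k_2+1}=\operatorname{rank}\mathbf B^{k_2}=r_2\le m$, let $\mathbf D\in\mathbb C^{n\times m}$, and let $\tilde{\mathbf D}=\mathbf A^{k_1}\mathbf D\mathbf B^{k_2}$ with $l$-th row $\tilde{\mathbf d}_{l.}$ and $t$-th column $\tilde{\mathbf d}_{.t}$. For $i=1,\dots,n$, $j=1,\dots,m$ define the column vector $\mathbf d^{\mathbf B}_{.j}\in\mathbb C^{n}$ with $l$-th entry $\sum_{\alpha\in I_{r_2,m}\{j\}}\left|\left(\mathbf B^{k_2+1}_{j.}(\tilde{\mathbf d}_{l.})\right)^{\alpha}_{\alpha}\right|$ and the row vector $\mathbf d^{\mathbf A}_{i.}\in\mathbb C^{1\times m}$ with $t$-th entry $\sum_{\beta\in J_{r_1,n}\{i\}}\left|\left(\mathbf A^{k_1+1}_{.i}(\tilde{\mathbf d}_{.t})\right)^{\beta}_{\beta}\right|$. Then the Drazin inverse solution $\mathbf X=\mathbf A^{D}\mathbf D\mathbf B^{D}=(x_{ij})\in\mathbb C^{n\times m}$ of $\mathbf A\mathbf X\mathbf B=\mathbf D$ satisfies, for all $i,j$, \[x_{ij}=\frac{\sum_{\beta\in J_{r_1,n}\{i\}}\left|\left(\mathbf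 A^{k_1+1}_{.i}(\mathbf d^{\mathbf B}_{.j})\right)^{\beta}_{\beta}\right|}{\sum_{\beta\in J_{r_1,n}}\left|(\mathbf A^{k_1+1})^{\beta}_{\beta}\right|\sum_{\alpha\in I_{r_2,m}}\left|(\mathbf B^{k_2+1})^{\alpha}_{\alpha}\right|} =\frac{\sum_{\alpha\in I_{r_2,m}\{j\}}\left|\left(\mathbf B^{k_2+1}_{j.}(\mathbf d^{\mathbf A}_{i.})\right)^{\alpha}_{\alpha}\right|}{\sum_{\beta\in J_{r_1,n}}\left|(\mathbf A^{k_1+1})^{\beta}_{\beta}\right|\sum_{\alpha\in I_{r_2,m}}\left|(\mathbf B^{k_2+1})^{\alpha}_{\alpha}\right|}.\]
   Context: For a square $\mathbf M$, $\operatorname{Ind}\mathbf M$ is the smallest nonnegative $k$ with $\operatorname{rank}\mathbf M^{k+1}=\operatorname{rank}\mathbf M^{k}$; the Drazin inverse $\mathbf M^{D}$ is the unique $\mathbf X$ with $\mathbf M^{k+1}\mathbf X=\mathbf M^{k}$, $\mathbf X\mathbf M\mathbf X=\mathbf X$, $\mathbf M\mathbf X=\mathbf X\mathbf M$, $k=\operatorname{Ind}\mathbf M$. $\mathbf M_{.i}(\mathbf c)$ (resp. $\mathbf M_{j.}(\mathbf c)$) is obtained by replacing the $i$-th column (resp. $j$-th row) of $\mathbf M$ by $\mathbf c$. For $1\le k\le s$, $L_{k,s}$ is the set of strictly increasing sequences of $k$ elements of $\{1,\dots,s\}$; $I_{k,s}=J_{k,s}=L_{k,s}$, $I_{k,s}\{i\}=J_{k,s}\{i\}=\{\alpha\in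 L_{k,s}:i\in\alpha\}$; $\mathbf M^{\alpha}_{\alpha}$ is the principal submatrix indexed by $\alpha$; $|\cdot|$ is the determinant. *)

(* Complex numbers: an arbitrary numClosedFieldType C
   (mathcomp's abstraction of the complex numbers; instances: algC, R[i]). *)
From HB Require Import structures.
From mathcomp Require Import all_boot all_order all_algebra.
From Stdlib Require Import ClassicalEpsilon.
Set Implicit Arguments. Unset Strict Implicit. Unset Printing Implicit Defensive.
Import Order.TTheory GRing.Theory Num.Theory.
Local Open Scope ring_scope.

Definition mx_index (R : fieldType) (n : nat) (M : 'M[R]_n) (k : nat) : Prop :=
  \rank (M ^+ k.+1) = \rank (M ^+ k) /\
  (forall j : nat, (j < k)%N -> \rank (M ^+ j.+1) <> \rank (M ^+ j)).

Definition drazin_spec (R : fieldType) (n : nat) (M X : 'M[R]_n) : Prop :=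
  exists k : nat, mx_index M k /\
    M ^+ k.+1 *m X = M ^+ k /\ X *m M *m X = X /\ M *m X = X *m M.

Definition drazin (R : fieldType) (n : nat) (M : 'M[R]_n) : 'M[R]_n :=
  epsilon (inhabits 0) (fun X => drazin_spec M X).

Definition colrep (R : fieldType) (n : nat) (M : 'M[R]_n) (i : 'I_n) (c : 'cV[R]_n)
  : 'M[R]_n := \matrix_(p, q) (if q == i then c p 0 else M p q).

Definition rowrep (R : fieldType) (n : nat) (M : 'M[R]_n) (j : 'I_n) (c : 'rV[R]_n)
  : 'M[R]_n := \matrix_(p, q) (if p == j then c 0 q else M p q).

(* |M^a_a| : the principal minor of M indexed by a (a strictly increasing
   sequence of indices is represented by the set of its elements, enumerated
   in increasing order). *)
Definition pminor (R : fieldType) (n : nat) (M : 'M[R]_n) (a : {set 'I_n}) : R :=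
  \det (mxsub (fun p : 'I_#|a| => enum_val p) (fun q : 'I_#|a| => enum_val q) M).

From HB Require Import structures.
From mathcomp Require Import all_boot all_order all_algebra all_fingroup.
From Stdlib Require Import ClassicalEpsilon.
Set Implicit Arguments. Unset Strict Implicit. Unset Printing Implicit Defensive.
Import Order.TTheory GRing.Theory Num.Theory.
Local Open Scope ring_scope.

(* Let M = A^(k+1) = P Q be a full-rank factorisation (P = col_base M,
   Q = row_base M, inner dimension r = rank M).  The index condition
   rank A^(k+1) = rank A^k makes Q P invertible, and A^D = M (A^D)^(k+2)
   = (A^D)^(k+2) M, so P adj(QP) Q A^D = det(QP) A^D = A^D P adj(QP) Q.
   On the determinantal side, Cauchy-Binet gives det(QP) = sum of the r x r
   principal minors of M, and Cramer's rule followed by Cauchy-Binet shows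
   that the sum of the principal minors of M containing i, with column i
   replaced by P w, is (P adj(QP) w)_i; dually for rows.  Applied to A and to B
   both numerators become det(Q_A P_A) det(Q_B P_B) (A^D D B^D)_ij. *)

Lemma det_mulmx_sum_rowsub (R : comPzRingType) r n (Q : 'M[R]_(r, n)) (P : 'M[R]_(n, r)) :
  \det (Q *m P) = \sum_(g : {ffun 'I_r -> 'I_n}) (\prod_a Q a (g a)) * \det (rowsub g P).
Proof.
transitivity (\sum_(s : 'S_r) \sum_(g : {ffun 'I_r -> 'I_n})
   (-1) ^+ s * \prod_a (Q a (g a) * P (g a) (s a))).
  apply: eq_bigr => s _.
  rewrite (eq_bigr (fun a => \sum_l Q a l * P l (s a))); last by move=> a _; rewrite mxE.
  by rewrite bigA_distr_bigA big_distrr.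
rewrite exchange_big /=; apply: eq_bigr => g _.
rewrite big_distrr /=; apply: eq_bigr => s _.
rewrite mulrCA; congr (_ * _); rewrite -big_split /=.
by apply: eq_bigr => a _; rewrite mxE.
Qed.

Lemma det_colsub_mul_rowsub (R : comPzRingType) r n (Q : 'M[R]_(r, n)) (P : 'M[R]_(n, r))
    (e : 'I_r -> 'I_n) :
  \det (colsub e Q) * \det (rowsub e P)
    = \sum_(s : 'S_r) (\prod_a Q a (e (s a))) * \det (rowsub (e \o s) P).
Proof.
rewrite big_distrl /=; apply: eq_bigr => s _.
have -> : rowsub (e \o s) P = row_perm s (rowsub e P) by apply/matrixP => i j; rewrite !mxE.
rewrite row_permE det_mulmx det_perm mulrA; congr (_ * _); rewrite mulrC.
by congr (_ * _); apply: eq_bigr => a _; rewrite mxE.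
Qed.

Section InjectiveImage.
Variables (r n : nat) (e : 'I_r -> 'I_n).
Hypothesis e_inj : injective e.

Lemma injective_image_reorder (g : {ffun 'I_r -> 'I_n}) :
  injectiveb g && ([set g a | a : 'I_r] == [set e a | a : 'I_r])
    = (g \in [set [ffun a => e (s a)] | s : 'S_r]).
Proof.
apply/andP/imsetP => [[/injectiveP g_inj /eqP g_im] | [s _ ->]]; last first.
  split; first by apply/injectiveP => x y; rewrite !ffunE => /e_inj /perm_inj.
  apply/eqP/setP => x; apply/imsetP/imsetP => [[a _ ->] | [a _ ->]].
    by exists (s a); rewrite ?ffunE.
  by exists ((s^-1)%g a); rewrite ?ffunE ?permKV.
have /all_sig [f ef] : forall a, {a' | e a' = g a}.
  move=> a; have : g a \in [set e a | a : 'I_r] by rewrite -g_im imset_f.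
  by move/imsetP/sig2_eqW => [a' _ ->]; exists a'.
have f_inj : injective f by move=> x y fxy; apply: g_inj; rewrite -!ef fxy.
exists (perm f_inj) => //; apply/ffunP => a; by rewrite ffunE permE ef.
Qed.

Lemma sum_injective_image (T : nmodType) (F : {ffun 'I_r -> 'I_n} -> T) :
  \sum_(g : {ffun 'I_r -> 'I_n}
         | injectiveb g && ([set g a | a : 'I_r] == [set e a | a : 'I_r])) F g
    = \sum_(s : 'S_r) F [ffun a => e (s a)].
Proof.
rewrite (eq_bigl _ _ injective_image_reorder) big_imset //.
move=> s1 s2 _ _ /ffunP eq_s; apply/permP => a; apply: e_inj.
by have := eq_s a; rewrite !ffunE.
Qed.

End InjectiveImage.

Lemma pminor_enum (R : fieldType) n r (b : {set 'I_n}) : #|b| = r ->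
  exists e : 'I_r -> 'I_n, [/\ injective e, b = [set e a | a : 'I_r]
    & forall M : 'M[R]_n, pminor M b = \det (mxsub e e M)].
Proof.
move=> hb; exists (fun a => enum_val (cast_ord (esym hb) a)); split.
- by move=> x y /enum_val_inj /cast_ord_inj.
- apply/setP => x; apply/idP/imsetP => [xb | [a _ ->]]; last exact: enum_valP.
  by exists (cast_ord hb (enum_rank_in xb x)); rewrite ?cast_ordK ?enum_rankK_in.
- by move=> M; subst r; congr (\det _); apply/matrixP => i j; rewrite !mxE !cast_ord_id.
Qed.

Theorem cauchy_binet (R : fieldType) r n (Q : 'M[R]_(r, n)) (P : 'M[R]_(n, r)) :
  \det (Q *m P) = \sum_(b : {set 'I_n} | #|b| == r) pminor (P *m Q) b.
Proof.
rewrite det_mulmx_sum_rowsub (bigID (fun g : {ffun 'I_r -> 'I_n} => injectiveb g)) /=.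
rewrite [X in _ + X]big1 ?addr0; last first.
  move=> g /injectivePn [a1 [a2 a12 g12]].
  by rewrite (determinant_alternate a12) ?mulr0 // => j; rewrite !mxE g12.
rewrite (partition_big (fun g : {ffun 'I_r -> 'I_n} => [set g a | a : 'I_r])
          (fun b => #|b| == r)) /=; last first.
  by move=> g /injectiveP g_inj; rewrite card_imset // card_ord.
apply: eq_bigr => b /eqP /(pminor_enum R) [e [e_inj b_im pmE]].
rewrite pmE {1}b_im sum_injective_image // mxsub_mul det_mulmx mulrC det_colsub_mul_rowsub.
apply: eq_bigr => s _; congr (_ * _).
  by apply: eq_bigr => a _; rewrite ffunE.
by congr (\det _); apply/matrixP => i j; rewrite !mxE ffunE.
Qed.

Definition rowrep_mx (R : Type) m n (M : 'M[R]_(m, n)) (p : 'I_m) (u : 'rV[R]_n)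
  : 'M[R]_(m, n) := \matrix_(a, q) (if a == p then u 0 q else M a q).

Lemma rowrep_mx_mulmx (R : pzSemiRingType) m n l (Q : 'M[R]_(m, n)) (P : 'M[R]_(n, l)) p u :
  rowrep_mx Q p u *m P = rowrep_mx (Q *m P) p (u *m P).
Proof.
apply/matrixP => a c; rewrite /rowrep_mx !mxE; under eq_bigr do rewrite mxE.
by case: eqP.
Qed.

Lemma colsub_rowrep_mx (R : Type) m n l (f : 'I_l -> 'I_n) (Q : 'M[R]_(m, n)) p u :
  colsub f (rowrep_mx Q p u) = rowrep_mx (colsub f Q) p (colsub f u).
Proof. by apply/matrixP => a c; rewrite /rowrep_mx !mxE. Qed.

Lemma det_rowrep_mx (R : comPzRingType) n (N : 'M[R]_n) p (u : 'rV[R]_n) :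
  \det (rowrep_mx N p u) = (u *m \adj N) 0 p.
Proof.
rewrite (expand_det_row _ p) /rowrep_mx mxE; apply: eq_bigr => q _.
rewrite !mxE eqxx; congr (_ * _); rewrite /cofactor; congr (_ * \det _).
by apply/matrixP => a c; rewrite !mxE eq_sym (negPf (neq_lift _ _)).
Qed.

Lemma det_colrep (R : fieldType) n (N : 'M[R]_n) q (w : 'cV[R]_n) :
  \det (colrep N q w) = (\adj N *m w) q 0.
Proof.
have -> : colrep N q w = (rowrep_mx N^T q w^T)^T.
  by apply/matrixP => a c; rewrite /colrep /rowrep_mx !mxE.
by rewrite det_tr det_rowrep_mx -trmx_adj -trmx_mul mxE.
Qed.

Lemma colrep_mulmx (R : fieldType) n (P Q : 'M[R]_n) q (w : 'cV[R]_n) :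
  colrep (P *m Q) q (P *m w) = P *m colrep Q q w.
Proof.
apply/matrixP => a c; rewrite /colrep [RHS]mxE; under eq_bigr do rewrite mxE.
by rewrite !mxE; case: eqP.
Qed.

Lemma mxsub_colrep (R : fieldType) n r (e : 'I_r -> 'I_n) (M : 'M[R]_n) q c :
  injective e -> mxsub e e (colrep M (e q) c) = colrep (mxsub e e M) q (rowsub e c).
Proof. by move=> e_inj; apply/matrixP => a b; rewrite /colrep !mxE (inj_eq e_inj). Qed.

Lemma colsub_delta_mx (R : pzSemiRingType) n r (e : 'I_r -> 'I_n) q :
  injective e -> colsub e 'e_(e q) = 'e_q :> 'rV[R]_r.
Proof. by move=> e_inj; apply/matrixP => a c; rewrite !mxE (inj_eq e_inj). Qed.

Lemma colsub_delta_mx_out (R : pzSemiRingType) n r (e : 'I_r -> 'I_n) i :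
  i \notin [set e a | a : 'I_r] -> colsub e 'e_i = 0 :> 'rV[R]_r.
Proof.
move=> i_out; apply/matrixP => a c; rewrite !mxE.
by case: (e c =P i) => [ei | _]; [case/imsetP: i_out; exists c | rewrite andbF].
Qed.

Lemma sum_pminor_colrep (R : fieldType) r n (P : 'M[R]_(n, r)) (Q : 'M[R]_(r, n))
    (i : 'I_n) (w : 'cV[R]_r) :
  \sum_(b : {set 'I_n} | (#|b| == r) && (i \in b)) pminor (colrep (P *m Q) i (P *m w)) b
    = (P *m \adj (Q *m P) *m w) i 0.
Proof.
(* Cramer's rule writes each entry of P adj(QP) as the determinant of (Q with a row
   replaced) times P, which Cauchy-Binet splits into principal minors; the two sides
   are then compared one index set b at a time. *)
have cramer p : (P *m \adj (Q *m P)) i p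
    = \sum_(b : {set 'I_n} | #|b| == r) pminor (P *m rowrep_mx Q p 'e_i) b.
  by rewrite -cauchy_binet rowrep_mx_mulmx det_rowrep_mx -mulmxA -rowE [RHS]mxE.
rewrite [RHS]mxE; under [RHS]eq_bigr do rewrite cramer big_distrl /=.
rewrite exchange_big big_mkcondr /=; apply: eq_bigr => b /eqP /(pminor_enum R).
case=> e [e_inj b_im pmE].
under eq_bigr do rewrite pmE mxsub_mul det_mulmx colsub_rowrep_mx det_rowrep_mx -mulrA.
rewrite -big_distrr /=; case: ifPn => [i_in | i_out]; last first.
  by rewrite big1 ?mulr0 // => p _; rewrite colsub_delta_mx_out -?b_im // mul0mx mxE mul0r.
have /imsetP [q _ ->] : i \in [set e a | a : 'I_r] by rewrite -b_im.
rewrite pmE mxsub_colrep // mxsub_mul -mul_rowsub_mx colrep_mulmx det_mulmx det_colrep.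
rewrite colsub_delta_mx // -rowE mxE; congr (_ * _).
by apply: eq_bigr => p _; rewrite [in RHS]mxE.
Qed.

(* The columns of [rowrep_minor_sum (B ^+ k2.+1) r2 Dt] are the paper's vectors d^B_{.j},
   the rows of [colrep_minor_sum (A ^+ k1.+1) r1 Dt] are its d^A_{i.}. *)
Definition colrep_minor_sum (R : fieldType) n m (M : 'M[R]_n) (r : nat) (W : 'M[R]_(n, m))
  : 'M[R]_(n, m) := \matrix_(i, t)
    \sum_(b : {set 'I_n} | (#|b| == r) && (i \in b)) pminor (colrep M i (col t W)) b.

Definition rowrep_minor_sum (R : fieldType) n m (M : 'M[R]_m) (r : nat) (W : 'M[R]_(n, m))
  : 'M[R]_(n, m) := \matrix_(l, j)
    \sum_(a : {set 'I_m} | (#|a| == r) && (j \in a)) pminor (rowrep M j (row l W)) a.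

Lemma colrep_minor_sumE (R : fieldType) n m (M : 'M[R]_n) r (W : 'M[R]_(n, m)) i t :
  colrep_minor_sum M r W i t
    = \sum_(b : {set 'I_n} | (#|b| == r) && (i \in b)) pminor (colrep M i (col t W)) b.
Proof. by rewrite mxE. Qed.

Lemma rowrep_minor_sumE (R : fieldType) n m (M : 'M[R]_m) r (W : 'M[R]_(n, m)) l j :
  rowrep_minor_sum M r W l j
    = \sum_(a : {set 'I_m} | (#|a| == r) && (j \in a)) pminor (rowrep M j (row l W)) a.
Proof. by rewrite mxE. Qed.

Lemma colrep_minor_sum_mulmx (R : fieldType) r n m (P : 'M[R]_(n, r)) (Q : 'M[R]_(r, n))
    (V : 'M[R]_(r, m)) :
  colrep_minor_sum (P *m Q) r (P *m V) = P *m \adj (Q *m P) *m V.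
Proof.
apply/matrixP => i t; rewrite mxE colE -mulmxA -colE sum_pminor_colrep.
by rewrite colE mulmxA -colE [LHS]mxE.
Qed.

Lemma pminor_tr (R : fieldType) n (M : 'M[R]_n) b : pminor M^T b = pminor M b.
Proof. by rewrite /pminor -det_tr trmx_mxsub trmxK. Qed.

Lemma rowrep_minor_sum_tr (R : fieldType) n m (M : 'M[R]_m) r (W : 'M[R]_(n, m)) :
  rowrep_minor_sum M r W = (colrep_minor_sum M^T r W^T)^T.
Proof.
apply/matrixP => l j; rewrite !mxE; apply: eq_bigr => a _; rewrite -pminor_tr.
by congr pminor; apply/matrixP => p q; rewrite !mxE.
Qed.

Lemma rowrep_minor_sum_mulmx (R : fieldType) r n m (P : 'M[R]_(m, r)) (Q : 'M[R]_(r, m))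
    (U : 'M[R]_(n, r)) :
  rowrep_minor_sum (P *m Q) r (U *m Q) = U *m \adj (Q *m P) *m Q.
Proof.
rewrite rowrep_minor_sum_tr !trmx_mul colrep_minor_sum_mulmx.
by rewrite !trmx_mul trmx_adj !trmx_mul !trmxK mulmxA.
Qed.

Lemma adj_mulmx_base_l (R : comPzRingType) r n m (P : 'M[R]_(n, r)) (Q : 'M[R]_(r, n))
    (Z : 'M[R]_(n, m)) :
  P *m \adj (Q *m P) *m Q *m (P *m Q *m Z) = \det (Q *m P) *: (P *m Q *m Z).
Proof.
rewrite -!mulmxA (mulmxA Q P) (mulmxA (\adj _)) mul_adj_mx mul_scalar_mx.
by rewrite -scalemxAr !mulmxA.
Qed.

Lemma adj_mulmx_base_r (R : comPzRingType) r n m (P : 'M[R]_(n, r)) (Q : 'M[R]_(r, n))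
    (Z : 'M[R]_(m, n)) :
  Z *m (P *m Q) *m P *m \adj (Q *m P) *m Q = \det (Q *m P) *: (Z *m (P *m Q)).
Proof.
rewrite -!mulmxA (mulmxA Q P) (mulmxA (Q *m P)) mul_mx_adj mul_scalar_mx.
by rewrite -!scalemxAr !mulmxA.
Qed.

Lemma mulmx_base_unit (R : fieldType) n (M Z : 'M[R]_n) :
  M = Z *m (M *m M) -> row_base M *m col_base M \in unitmx.
Proof.
move: (col_base M) (row_base M) (mulmx_base M) (row_base_free M) (col_base_full M).
move: (\rank M) => r P Q <- /row_freeP [Qr QQr] /row_fullP [Pl PlP] MZ.
have P_fact : P = Z *m P *m (Q *m P).
  by rewrite -[LHS]mulmx1 -QQr mulmxA {1}MZ !mulmxA -(mulmxA _ Q Qr) QQr mulmx1.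
have : (Pl *m Z *m P) *m (Q *m P) = 1%:M by rewrite -!mulmxA (mulmxA Z) -P_fact.
by case/mulmx1_unit.
Qed.

Lemma group_inverse_mulmx (R : comUnitRingType) r n (P : 'M[R]_(n, r)) (Q : 'M[R]_(r, n)) :
  Q *m P \in unitmx -> exists G : 'M[R]_n,
    [/\ P *m Q *m G = G *m (P *m Q), G *m (P *m Q) *m G = G & P *m Q *m G *m (P *m Q) = P *m Q].
Proof.
move=> Yu; set Yi := invmx (Q *m P).
have YYi : Q *m P *m Yi = 1%:M by apply: mulmxV.
have YiY : Yi *m (Q *m P) = 1%:M by apply: mulVmx.
pose G := P *m Yi *m Yi *m Q.
have MG : P *m Q *m G = P *m Yi *m Q.
  by rewrite !mulmxA -(mulmxA P Q P) -(mulmxA P (Q *m P)) YYi mulmx1.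
have GM : G *m (P *m Q) = P *m Yi *m Q.
  by rewrite -!mulmxA (mulmxA Q P Q) (mulmxA Yi (Q *m P)) YiY mul1mx.
exists G; split; first by rewrite MG GM.
- by rewrite GM /G -!mulmxA (mulmxA Q P) (mulmxA Yi (Q *m P)) YiY mul1mx.
- by rewrite MG -!mulmxA (mulmxA Q P Q) (mulmxA Yi (Q *m P)) YiY mul1mx.
Qed.

Lemma group_inverse_commute (R : pzRingType) (M G A : R) :
  M * G = G * M -> G * M * G = G -> M * G * M = M -> A * M = M * A -> A * G = G * A.
Proof.
move=> MG GMG MGM AM.
(* A commutes with the idempotent E = M G because (1 - E) A E = 0 = E A (1 - E). *)
have ME : M * (M * G) = M by rewrite MG mulrA MGM.
have EcAE : (1 - M * G) * A * (M * G) = 0.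
  by rewrite mulrA -(mulrA _ A M) AM mulrA mulrBl mul1r MGM subrr !mul0r.
have EAEc : M * G * A * (1 - M * G) = 0.
  by rewrite {1}MG -!mulrA (mulrA M A) -AM -mulrA mulrBr mulr1 ME subrr !mulr0.
have AE : A * (M * G) = M * G * A.
  have e1 : A * (M * G) = M * G * A * (M * G).
    by apply/eqP; rewrite -subr_eq0 -EcAE !mulrBl mul1r.
  have e2 : M * G * A = M * G * A * (M * G).
    by apply/eqP; rewrite -subr_eq0 -EAEc mulrBr mulr1.
  by rewrite e1 -e2.
have GE : M * G * G = G by rewrite MG GMG.
rewrite -{1}GE mulrA AE {1}MG -(mulrA G M A) -AM mulrA -(mulrA (G * A) M G).
by rewrite -(mulrA G A) AE !mulrA GMG.
Qed.

Lemma outer_inverse_expE (R : pzRingType) (A X : R) j :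
  A * X = X * A -> X * A * X = X -> X = A ^+ j.+1 * X ^+ j.+2.
Proof.
move=> AX XAX; have AX_idem i : (A * X) ^+ i.+1 = A * X.
  elim: i => [|i IH]; first by rewrite expr1.
  by rewrite exprS IH mulrA -(mulrA A X A) -mulrA XAX.
by rewrite (exprSr X) mulrA -exprMn_comm // AX_idem AX XAX.
Qed.

Lemma mx_index_uniq (R : fieldType) n (A : 'M[R]_n) k k' :
  mx_index A k -> mx_index A k' -> k = k'.
Proof.
move=> [rk min_k] [rk' min_k']; case: (ltngtP k k') => // lt_kk'.
- by have := min_k' _ lt_kk'; rewrite rk.
- by have := min_k _ lt_kk'; rewrite rk'.
Qed.

Section Drazin.
Variables (R : fieldType) (n : nat) (A : 'M[R]_n) (k : nat).
Hypothesis hk : mx_index A k.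

Local Notation M := (A ^+ k.+1).
Local Notation P := (col_base M).
Local Notation Q := (row_base M).

Lemma mx_index_factor : exists W : 'M[R]_n, A ^+ k = W * M.
Proof.
have sub : (M <= A ^+ k)%MS by rewrite exprS -mulmxE submxMl.
have [_] := mxrank_leqif_sup sub; rewrite hk.1 eqxx => /esym /submxP [W AkW].
by exists W; rewrite -mulmxE.
Qed.

Lemma mx_index_core_unit : Q *m P \in unitmx.
Proof.
have [W AkW] := mx_index_factor.
have AkWj j : A ^+ k = W ^+ j * A ^+ (k + j).
  elim: j => [|j IH]; first by rewrite expr0 mul1r addn0.
  rewrite IH exprD AkW -mulrA -exprD mulrA -exprSr.
  by rewrite addSn addnS.
apply: (@mulmx_base_unit _ _ _ (W ^+ k.+1)).
by rewrite !mulmxE -exprD {1}exprSr (AkWj k.+1) -mulrA -exprSr addSn.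
Qed.

Lemma drazin_exists : exists X, drazin_spec A X.
Proof.
(* The witness is G A^k, with G the group inverse of M. *)
have [G] := group_inverse_mulmx mx_index_core_unit; rewrite mulmx_base !mulmxE.
case=> MG GMG MGM; have AM : A * M = M * A by rewrite -exprS exprSr.
have AG := group_inverse_commute MG GMG MGM AM.
have GAk : G * A ^+ k = A ^+ k * G := commrX k (esym AG).
have MAk : M * A ^+ k = A ^+ k * M by rewrite -!exprD addnC.
have [W AkW] := mx_index_factor.
exists (G * A ^+ k), k; rewrite !mulmxE; split=> //; split; [|split].
- by rewrite GAk mulrA MAk {1}AkW -!mulrA MG (mulrA M G M) MGM -AkW.
- by rewrite -(mulrA G) -exprSr mulrA GMG.
- by rewrite mulrA AG -!mulrA -exprS exprSr.
Qed.

Lemma drazinP :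
  [/\ M *m drazin A = A ^+ k, drazin A *m A *m drazin A = drazin A
    & A *m drazin A = drazin A *m A].
Proof.
have [k' [hk' spec]] := epsilon_spec (inhabits 0) (drazin_spec A) drazin_exists.
by move: spec; rewrite -(mx_index_uniq hk hk') => -[? [? ?]].
Qed.

Lemma drazin_powE :
  drazin A = P *m Q *m drazin A ^+ k.+2 /\ drazin A = drazin A ^+ k.+2 *m (P *m Q).
Proof.
have [_ XAX AX] := drazinP; rewrite mulmx_base !mulmxE in XAX AX *.
have XE := outer_inverse_expE k AX XAX; split=> //.
by rewrite {1}XE; exact: commrX (esym (commrX _ (esym AX))).
Qed.

Lemma expr_index_drazinl : A ^+ k = P *m Q *m drazin A.
Proof. by have [<- _ _] := drazinP; rewrite mulmx_base. Qed.

Lemma expr_index_drazinr : A ^+ k = drazin A *m (P *m Q).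
Proof.
have [<- _ AX] := drazinP; rewrite mulmx_base !mulmxE in AX *.
exact: esym (commrX _ (esym AX)).
Qed.

Lemma det_core_neq0 : \det (Q *m P) != 0.
Proof. by rewrite -unitfE -unitmxE mx_index_core_unit. Qed.

Lemma adj_core_drazinl : P *m \adj (Q *m P) *m Q *m drazin A = \det (Q *m P) *: drazin A.
Proof.
by have [-> _] := drazin_powE; rewrite adj_mulmx_base_l.
Qed.

Lemma adj_core_drazinr : drazin A *m P *m \adj (Q *m P) *m Q = \det (Q *m P) *: drazin A.
Proof.
by have [_ ->] := drazin_powE; rewrite adj_mulmx_base_r.
Qed.

Lemma sum_pminor_index : \sum_(b : {set 'I_n} | #|b| == \rank M) pminor M b = \det (Q *m P).
Proof. by rewrite cauchy_binet mulmx_base. Qed.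

Lemma colrep_minor_sum_drazin m (V : 'M[R]_(n, m)) :
  colrep_minor_sum M (\rank M) (A ^+ k *m V) = \det (Q *m P) *: (drazin A *m V).
Proof.
rewrite -{1}(mulmx_base M) expr_index_drazinl -(mulmxA (P *m Q)) -(mulmxA P).
by rewrite colrep_minor_sum_mulmx (mulmxA _ Q) (mulmxA _ (drazin A)) adj_core_drazinl scalemxAl.
Qed.

Lemma rowrep_minor_sum_drazin m (U : 'M[R]_(m, n)) :
  rowrep_minor_sum M (\rank M) (U *m A ^+ k) = \det (Q *m P) *: (U *m drazin A).
Proof.
rewrite -{1}(mulmx_base M) expr_index_drazinr (mulmxA (drazin A)) (mulmxA U).
rewrite rowrep_minor_sum_mulmx -(mulmxA U (drazin A *m P)) -(mulmxA U).
by rewrite adj_core_drazinr scalemxAr.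
Qed.

End Drazin.

Theorem theorem4p9 (C : numClosedFieldType) (n m : nat)
  (A : 'M[C]_n) (B : 'M[C]_m) (D : 'M[C]_(n, m))
  (k1 k2 r1 r2 : nat)
  (hk1 : mx_index A k1) (hk2 : mx_index B k2)
  (hr1 : \rank (A ^+ k1) = r1) (hr2 : \rank (B ^+ k2) = r2) :
  let Dt := A ^+ k1 *m D *m B ^+ k2 in
  let dB := fun j : 'I_m => \col_(l < n)
      \sum_(a : {set 'I_m} | (#|a| == r2) && (j \in a))
         pminor (rowrep (B ^+ k2.+1) j (row l Dt)) a in
  let dA := fun i : 'I_n => \row_(t < m)
      \sum_(b : {set 'I_n} | (#|b| == r1) && (i \in b))
         pminor (colrep (A ^+ k1.+1) i (col t Dt)) b in
  let den := (\sum_(b : {set 'I_n} | #|b| == r1) pminor (A ^+ k1.+1) b) *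
             (\sum_(a : {set 'I_m} | #|a| == r2) pminor (B ^+ k2.+1) a) in
  let X := drazin A *m D *m drazin B in
  forall (i : 'I_n) (j : 'I_m),
    X i j = (\sum_(b : {set 'I_n} | (#|b| == r1) && (i \in b))
               pminor (colrep (A ^+ k1.+1) i (dB j)) b) / den /\
    X i j = (\sum_(a : {set 'I_m} | (#|a| == r2) && (j \in a))
               pminor (rowrep (B ^+ k2.+1) j (dA i)) a) / den.
Proof.
move=> Dt dB dA den X i j.
rewrite -hk1.1 in hr1; rewrite -hk2.1 in hr2; subst r1 r2.
have dBE : dB j = col j (rowrep_minor_sum (B ^+ k2.+1) (\rank (B ^+ k2.+1)) Dt).
  by apply/matrixP=> l c; rewrite !mxE.
have dAE : dA i = row i (colrep_minor_sum (A ^+ k1.+1) (\rank (A ^+ k1.+1)) Dt).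
  by apply/matrixP=> c t; rewrite !mxE.
rewrite dBE dAE -colrep_minor_sumE -rowrep_minor_sumE /den !sum_pminor_index //.
set cA := \det _; set cB := \det _.
have -> : colrep_minor_sum (A ^+ k1.+1) (\rank (A ^+ k1.+1))
    (rowrep_minor_sum (B ^+ k2.+1) (\rank (B ^+ k2.+1)) Dt) = (cA * cB) *: X.
  rewrite rowrep_minor_sum_drazin // -(mulmxA (A ^+ k1)) scalemxAr colrep_minor_sum_drazin //.
  by rewrite -scalemxAr scalerA (mulmxA (drazin A)).
have -> : rowrep_minor_sum (B ^+ k2.+1) (\rank (B ^+ k2.+1))
    (colrep_minor_sum (A ^+ k1.+1) (\rank (A ^+ k1.+1)) Dt) = (cA * cB) *: X.
  rewrite /Dt -(mulmxA (A ^+ k1)) colrep_minor_sum_drazin // (mulmxA (drazin A)) scalemxAl.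
  by rewrite rowrep_minor_sum_drazin // -scalemxAl scalerA mulrC.
have cAB_neq0 : cA * cB != 0 by rewrite mulf_neq0 ?det_core_neq0.
by split; rewrite [(_ *: X) i j]mxE mulrC mulKf.
Qed.
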